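(* Let $M\in\mathrm{rep}\,G_{m,n}$ be interval-decomposable and $I\in\mathbb{I}_{m,n}$. Then for each $\ast\in\{ss,cc,tot\}$, $$d_M(V_I)=\bar d^\ast_M(I)+\sum_{\emptyset\neq S\subseteq\mathrm{Cov}(I)}(-1)^{\#S}\,\bar d^\ast_M\Big(\bigvee S\Big).$$
   Context: Fix a field $K$. For integers $m,n\ge1$, $G_{m,n}$ is the equioriented commutative $m\times n$ grid: the quiver with vertex set $\{(i,j):1\le i\le m,\ 1\le j\le n\}$ and arrows $(i,j)\to(i,j+1)$ and $(i,j)\to(i+1,j)$, bound by all commutativity relations; $\mathrm{rep}\,G_{m,n}$ is its category of finite-dimensional representations over $K$ satisfying the relations. For an indecomposable $L$, $d_M(L)$ is the multiplicity of $L$ in a Krull–Schmidt decomposition of $M$. An interval of $G_{m,n}$ is a nonempty full subquiver $I$ which is connected (as an undirected graph) and convex (whenever $x,y\in I_0$ and there are paths $x\to z$, $z\to y$ in $G_{m,n}$, then $z\in I_0$); $\mathbb{I}_{m,n}$ is the set of intervals ordered by inclusion of vertex sets. $\mathrm{Cov}(I)$ is the set of intervals covering $I$ in this poset; for $\emptyset\ne S\subseteq\mathrm{Cov}(I)$, $\bigvee S$ is the smallest interval containing all members of $S$ (it exists; it is the join in the poset $\{J:I\le J\}$). The interval representation $V_I$ has $K$ at vertices of $I$, $0$ elsewhere, identity maps on arrows inside $I$ and zero maps otherwise; $M$ is interval-decomposable if it is isomorphic to a direct sum of interval representations. Essential vertices: $I^{ss}_0$ is the set of sources and sinks of the quiver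 $I$; $I^{cc}_0=I_0\cap(\mathrm{pr}_1(I^{ss}_0)\times\mathrm{pr}_2(I^{ss}_0))$ with $\mathrm{pr}_1,\mathrm{pr}_2$ coordinate projections; $I^{tot}_0=I_0$. Let $KG_{m,n}$ be the $K$-linear category whose objects are the vertices and whose morphisms are $K$-linear combinations of paths modulo the commutativity relations; representations are $K$-linear functors $KG_{m,n}\to\mathrm{vect}_K$. For $\ast\in\{ss,cc,tot\}$, $\mathcal{C}^\ast_I$ is the full subcategory of $KG_{m,n}$ on $I^\ast_0$, and $M^\ast_I:=M|_{\mathcal{C}^\ast_I}$. The compressed multiplicity $\bar d^\ast_M(I)$ is the multiplicity of the indecomposable $(V_I)^\ast_I$ as a direct summand of $M^\ast_I$. *)

From HB Require Import structures.
From mathcomp Require Import all_boot all_order all_algebra.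
From Stdlib Require Import ClassicalEpsilon.
Set Implicit Arguments. Unset Strict Implicit. Unset Printing Implicit Defensive.
Import GRing.Theory.
Local Open Scope ring_scope.

(* Vertices of the m x n grid G_{m,n}; vertex (i,j) of the paper is the pair
   of ordinals (i-1, j-1) (0-based indexing). *)
Definition vert (m n : nat) := ('I_m * 'I_n)%type.

Section Grid.
Variables m n : nat.
Implicit Types (x y z : vert m n) (I J : {set vert m n}).

(* There is a path x -> y in G_{m,n} iff x <= y componentwise;
   modulo commutativity, Hom(x,y) in K G_{m,n} is K if gle x y, 0 otherwise. *)
Definition gle x y : bool := ((x.1 <= y.1) && (x.2 <= y.2))%N.

Definition arrow x y : bool :=
  ((x.1 == y.1) && ((x.2).+1 == y.2)%N) || ((x.2 == y.2) && ((x.1).+1 == y.1)%N).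

Definition adj x y : bool := arrow x y || arrow y x.

Definition connectedb I : bool :=
  [forall x in I, forall y in I,
     connect (fun a b => [&& a \in I, b \in I & adj a b]) x y].

Definition convexb I : bool :=
  [forall x in I, forall y in I, forall z, (gle x z && gle z y) ==> (z \in I)].

Definition is_interval I : bool := [&& I != set0, connectedb I & convexb I].

Definition Cov I : {set {set vert m n}} :=
  [set J | [&& is_interval J, I \proper J &
     [forall L : {set vert m n}, ~~ [&& is_interval L, I \proper L & L \proper J]]]].

(* the smallest interval containing all members of S (exists when S is a
   nonempty subset of Cov I) *)
Definition bigjoin (S : {set {set vert m n}}) : {set vert m n} :=
  epsilon (inhabits set0) (fun J =>
    is_interval J /\ (forall L, L \in S -> L \subset J) /\
    (forall J', is_interval J' -> (forall L, L \in S -> L \subset J') -> J \subset J')).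

Definition is_source I x : bool := (x \in I) && [forall y in I, ~~ arrow y x].
Definition is_sink I x : bool := (x \in I) && [forall y in I, ~~ arrow x y].
Definition ess_ss I : {set vert m n} := [set x | is_source I x || is_sink I x].
Definition ess_cc I : {set vert m n} :=
  [set x in I | (x.1 \in [set y.1 | y in ess_ss I]) &&
                (x.2 \in [set y.2 | y in ess_ss I])].
Definition ess_tot I : {set vert m n} := I.

End Grid.

Inductive ess_kind := SS | CC | TOT.

Definition ess m n (k : ess_kind) (I : {set vert m n}) : {set vert m n} :=
  match k with SS => ess_ss I | CC => ess_cc I | TOT => ess_tot I end.

(* Data of a representation: a finite-dimensional space K^(rdim x) at each
   vertex and a matrix for each pair (x,y) (row-vector convention: v |-> v *m
   rmap x y).  Only the values on the vertex set S of a full subcategory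
   C_S of K G_{m,n} and on pairs x <= y matter. *)
Record repd (K : fieldType) (m n : nat) := Repd {
  rdim : vert m n -> nat;
  rmap : forall x y : vert m n, 'M[K]_(rdim x, rdim y) }.

Section Reps.
Variables (K : fieldType) (m n : nat) (S : {set vert m n}).

(* M is a K-linear functor C_S -> vect_K, C_S the full subcategory of K G_{m,n}
   on the vertex set S *)
Definition is_rep (M : repd K m n) : Prop :=
  (forall x, x \in S -> rmap M x x = 1%:M) /\
  (forall x y z, x \in S -> y \in S -> z \in S -> gle x y -> gle y z ->
     rmap M x z = rmap M x y *m rmap M y z).

Definition is_hom (M N : repd K m n) (g : forall x, 'M[K]_(rdim M x, rdim N x)) : Prop :=
  forall x y, x \in S -> y \in S -> gle x y ->
    rmap M x y *m g y = g x *m rmap N x y.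

Definition is_iso (M N : repd K m n) : Prop :=
  exists (g : forall x, 'M[K]_(rdim M x, rdim N x))
         (h : forall x, 'M[K]_(rdim N x, rdim M x)),
    is_hom g /\ is_hom h /\
    forall x, x \in S -> g x *m h x = 1%:M /\ h x *m g x = 1%:M.

Definition is_dsum (M : repd K m n) (k : nat) (F : 'I_k -> repd K m n) : Prop :=
  exists (iota : forall i x, 'M[K]_(rdim (F i) x, rdim M x))
         (pi : forall i x, 'M[K]_(rdim M x, rdim (F i) x)),
    (forall i, is_hom (iota i)) /\ (forall i, is_hom (pi i)) /\
    (forall x, x \in S ->
       (forall i, iota i x *m pi i x = 1%:M) /\
       (forall i j, i != j -> iota i x *m pi j x = 0) /\
       \sum_i pi i x *m iota i x = 1%:M).

Definition is_zero (M : repd K m n) : Prop := forall x, x \in S -> rdim M x = 0%N.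

Definition indecomposable (M : repd K m n) : Prop :=
  is_rep M /\ ~ is_zero M /\
  forall A B : repd K m n, is_rep A -> is_rep B ->
    is_dsum M (fun i : 'I_2 => if val i == 0%N then A else B) ->
    is_zero A \/ is_zero B.

(* multiplicity of L in a Krull-Schmidt decomposition of M (well defined by
   the Krull-Schmidt theorem; chosen by epsilon) *)
Definition mult (M L : repd K m n) : nat :=
  epsilon (inhabits 0%N) (fun c => exists (k : nat) (F : 'I_k -> repd K m n),
    (forall i, indecomposable (F i)) /\ is_dsum M F /\
    exists s : {set 'I_k}, (forall i, i \in s <-> is_iso (F i) L) /\ c = #|s|).

End Reps.

(* interval representation V_I: K on I, 0 elsewhere, identity maps inside I
   (for x, y not both in I the matrix is empty, hence zero) *)
Definition VI (K : fieldType) m n (I : {set vert m n}) : repd K m n :=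
  @Repd K m n (fun x => nat_of_bool (x \in I)) (fun x y => \matrix_(i, j) 1).

Definition interval_decomposable (K : fieldType) m n (M : repd K m n) : Prop :=
  exists (k : nat) (F : 'I_k -> repd K m n), is_dsum setT M F /\
    forall i, exists J, is_interval J /\ is_iso setT (F i) (VI K J).

(* compressed multiplicity: multiplicity of (V_I)^*_I in M^*_I = M|_{C^*_I} *)
Definition cmult (K : fieldType) m n (k : ess_kind) (M : repd K m n)
  (I : {set vert m n}) : nat := mult (ess k I) M (VI K I).

From HB Require Import structures.
From mathcomp Require Import all_boot all_order all_algebra.
From Stdlib Require Import ClassicalEpsilon.
From mathcomp Require Import zify.
From Stdlib Require Import Lia.
Import GRing.Theory.
Local Open Scope ring_scope.
Set Implicit Arguments. Unset Strict Implicit. Unset Printing Implicit Defensive.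

(* For a representation L with End(L) = K and L(x0) one-dimensional, the multiplicity of L in
   M is the rank of the trace pairing Hom(L, M) x Hom(M, L) -> K, (u, w) |-> tr (u w)(x0):
   this rank is additive on direct sums, and on an indecomposable F it is 1 or 0 according as
   a composite L -> F -> L can be the identity, i.e. as L is a summand of F, i.e. as F ~ L.
   For M = (+)_i V_(J_i) this gives d_M(V_I) = #{i | J_i = I} and, over the essential
   vertices of I (which contain a source below and a sink above every vertex of I),
   compressed multiplicity #{i | I <= J_i}.  The formula then holds summand by summand by
   inclusion-exclusion over the covers of I: when I < J the covers of I inside J form a
   nonempty set whose nonempty subsets have alternating sum -1, and the join of S lies in J
   exactly when every member of S does. *)

Definition classicb (P : Prop) : bool :=
  if excluded_middle_informative P then true else false.

Lemma classicbP (P : Prop) : reflect P (classicb P).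
Proof. by rewrite /classicb; case: excluded_middle_informative => H; constructor. Qed.

Lemma mx_dim0l (K : fieldType) p q (A B : 'M[K]_(p, q)) : p = 0%N -> A = B.
Proof. by move=> Hp; subst p; apply/matrixP => [[]]. Qed.

Lemma mx_dim0r (K : fieldType) p q (A B : 'M[K]_(p, q)) : q = 0%N -> A = B.
Proof. by move=> Hq; subst q; apply/matrixP => i []. Qed.

Lemma mulmx_dim0 (K : fieldType) p q r (A : 'M[K]_(p, q)) (B : 'M[K]_(q, r)) :
  q = 0%N -> A *m B = 0.
Proof. by move=> Hq; subst q; apply/matrixP => i j; rewrite !mxE big_ord0. Qed.

Lemma mx_dim1_scalar (K : fieldType) p (A : 'M[K]_p) : p = 1%N -> A = (\tr A)%:M.
Proof.
move=> Hp; subst p; apply/matrixP => i j.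
by rewrite !ord1 /mxtrace big_ord1 !mxE eqxx mulr1n.
Qed.

Section DirectSums.
Variables (K : fieldType) (m n : nat) (S : {set vert m n}).
Local Notation rep := (repd K m n).
Local Notation homs A B := (forall x, 'M[K]_(rdim A x, rdim B x)).

Lemma is_hom_comp (A B C : rep) (f : homs A B) (g : homs B C) :
  is_hom S f -> is_hom S g -> is_hom S (fun x => f x *m g x).
Proof. by move=> Hf Hg x y Hx Hy Hxy; rewrite mulmxA Hf // -mulmxA Hg // mulmxA. Qed.

Lemma is_hom_lincomb (A B : rep) (T : finType) (c : T -> K) (f : T -> homs A B) :
  (forall i, is_hom S (f i)) -> is_hom S (fun x => \sum_i c i *: f i x).
Proof.
move=> Hf x y Hx Hy Hxy; rewrite mulmx_sumr mulmx_suml; apply: eq_bigr => i _.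
by rewrite -scalemxAr -scalemxAl Hf.
Qed.

Lemma is_hom1 (A : rep) : is_hom S (fun x => (1%:M : 'M[K]_(rdim A x))).
Proof. by move=> x y _ _ _; rewrite mul1mx mulmx1. Qed.

(* [is_dsum] over an arbitrary finite index type: for ['I_k] the two are convertible. *)
Definition is_dsumT (T : finType) (M : rep) (F : T -> rep) : Prop :=
  exists (iota : forall i, homs (F i) M) (pi : forall i, homs M (F i)),
    (forall i, is_hom S (iota i)) /\ (forall i, is_hom S (pi i)) /\
    (forall x, x \in S ->
       (forall i, iota i x *m pi i x = 1%:M) /\
       (forall i j, i != j -> iota i x *m pi j x = 0) /\
       \sum_i pi i x *m iota i x = 1%:M).

Lemma is_dsum_enum (T : finType) (M : rep) (F : T -> rep) :
  is_dsumT M F -> is_dsum S M (fun i : 'I_#|T| => F (enum_val i)).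
Proof.
case=> iota [pi [Hi [Hp Hx]]].
exists (fun i => iota (enum_val i)), (fun i => pi (enum_val i)).
split=> [i|]; first exact: Hi.
split=> [i|x xS]; first exact: Hp.
have [H1 [H0 Hs]] := Hx x xS.
split => //; split => [i j ne|]; first by apply: H0; rewrite (inj_eq enum_val_inj).
rewrite -Hs -(big_enum_val (A := T) (fun i => pi i x *m iota i x)).
by apply: eq_bigl => i; rewrite inE.
Qed.

Lemma is_dsum_nested (T : finType) (U : T -> finType) (M : rep) (N : T -> rep)
    (F : forall t, U t -> rep) :
  is_dsumT M N -> (forall t, is_dsumT (N t) (F t)) ->
  is_dsumT M (fun p : {t : T & U t} => F (tag p) (tagged p)).
Proof.
case=> iota [pi [Hi [Hp Hx]]] HN.
pose D t := constructive_indefinite_description _ (HN t).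
pose E t := constructive_indefinite_description _ (proj2_sig (D t)).
pose iota' t := proj1_sig (D t); pose pi' t := proj1_sig (E t).
have HE t := proj2_sig (E t).
exists (fun p x => iota' (tag p) (tagged p) x *m iota (tag p) x).
exists (fun p x => pi (tag p) x *m pi' (tag p) (tagged p) x).
split; first by case=> t a; apply: is_hom_comp => //; case: (HE t).
split; first by case=> t a; apply: is_hom_comp => //; case: (HE t) => _ [].
move=> x xS; have [H1 [H0 Hs]] := Hx x xS.
split.
  case=> t a /=; have [_ [_ /(_ x xS) [H1' _]]] := HE t.
  by rewrite mulmxA -(mulmxA _ (iota t x)) H1 mulmx1 H1'.
split.
  case=> t a [t' b] /=; case: (eqVneq t t') b => [<-|ne] b neq.
    have [_ [_ /(_ x xS) [_ [H0' _]]]] := HE t.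
    rewrite mulmxA -(mulmxA _ (iota t x)) H1 mulmx1 H0' //.
    by apply: contraNneq neq => ->.
  by rewrite mulmxA -(mulmxA _ (iota t x)) H0 // mulmx0 mul0mx.
transitivity (\sum_t \sum_(a : U t) pi t x *m (pi' t a x *m iota' t a x) *m iota t x).
  by rewrite sig_big_dep; apply: eq_bigr => p _; rewrite !mulmxA.
rewrite -Hs; apply: eq_bigr => t _; rewrite -mulmx_suml -mulmx_sumr.
by have [_ [_ /(_ x xS) [_ [_ ->]]]] := HE t; rewrite mulmx1.
Qed.

Lemma is_dsum_iso (F L : rep) : is_iso S F L -> is_dsum S F (fun _ : 'I_1 => L).
Proof.
case=> g [h [Hg [Hh Hgh]]]; exists (fun _ => h), (fun _ => g).
do 2!split => //; move=> x xS; have [H1 H2] := Hgh x xS.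
split => //; split; last by rewrite big_ord1.
by move=> i j; rewrite !ord1 eqxx.
Qed.

Definition pair_fam (A B : rep) (i : 'I_2) : rep := if val i == 0%N then A else B.

Lemma is_dsum_pair (M A B : rep) (iA : homs A M) (pA : homs M A) (iB : homs B M)
    (pB : homs M B) :
  is_hom S iA -> is_hom S pA -> is_hom S iB -> is_hom S pB ->
  (forall x, x \in S -> [/\ iA x *m pA x = 1%:M, iB x *m pB x = 1%:M,
     iA x *m pB x = 0, iB x *m pA x = 0 & pA x *m iA x + pB x *m iB x = 1%:M]) ->
  is_dsum S M (pair_fam A B).
Proof.
move=> HiA HpA HiB HpB Hx.
exists (fun i => if val i == 0%N as b return homs (if b then A else B) M then iA else iB).
exists (fun i => if val i == 0%N as b return homs M (if b then A else B) then pA else pB).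
split; first by case=> [[|[|i]] Hi].
split; first by case=> [[|[|i]] Hi].
move=> x xS; case: (Hx x xS) => H1 H2 H3 H4 H5.
split; first by case=> [[|[|i]] Hi].
split; first by case=> [[|[|i]] Hi]; case=> [[|[|j]] Hj].
by rewrite big_ord_recl big_ord1.
Qed.

Lemma is_dsum_pair_rdim (M A B : rep) : is_dsum S M (pair_fam A B) ->
  forall x, x \in S -> (rdim A x + rdim B x <= rdim M x)%N.
Proof.
case=> iota [pi [_ [_ Hx]]] x xS; have [H1 [H0 _]] := Hx x xS.
pose i0 : 'I_2 := ord0; pose i1 : 'I_2 := @Ordinal 2 1 isT.
have E : col_mx (iota i0 x) (iota i1 x) *m row_mx (pi i0 x) (pi i1 x) = 1%:M.
  by rewrite mul_col_row !H1 !H0 // -scalar_mx_block.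
have := mxrankM_maxl (col_mx (iota i0 x) (iota i1 x)) (row_mx (pi i0 x) (pi i1 x)).
by rewrite E mxrank1 => /leq_trans; apply; apply: rank_leq_col.
Qed.

Definition decomposition (M : rep) : Prop :=
  exists k (F : 'I_k -> rep), is_dsum S M F /\ forall i, indecomposable S (F i).

Lemma decomposition_dsum (T : finType) (M : rep) (N : T -> rep) :
  is_dsumT M N -> (forall t, decomposition (N t)) -> decomposition M.
Proof.
move=> HM HN.
pose D t := constructive_indefinite_description _ (HN t).
pose E t := constructive_indefinite_description _ (proj2_sig (D t)).
pose F t := proj1_sig (E t).
have [HF HFind] : (forall t, is_dsum S (N t) (F t)) /\
    (forall t i, indecomposable S (F t i)).
  by split => t; have [] := proj2_sig (E t).
exists #|{: {t : T & 'I_(proj1_sig (D t))}}|.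
exists (fun i => F (tag (enum_val i)) (tagged (enum_val i))).
split=> [|i]; last exact: HFind.
by apply: (is_dsum_enum (F := fun p : {t : T & _} => F (tag p) (tagged p)));
  apply: is_dsum_nested HM HF.
Qed.

Definition dim_on (M : rep) : nat := \sum_(x in S) rdim M x.

Lemma dim_on_gt0 (M : rep) : ~ is_zero S M -> (0 < dim_on M)%N.
Proof.
move=> HM; rewrite lt0n; apply/negP => /eqP; rewrite /dim_on => /eqP.
rewrite sum_nat_eq0 => /forall_inP Hz; apply: HM => x xS.
by apply/eqP; apply: Hz.
Qed.

Lemma exists_decomposition (M : rep) : is_rep S M -> decomposition M.
Proof.
elim: {M}(dim_on M).+1 {-2}M (ltnSn (dim_on M)) => // d IH M ltMd HM.
have [Hind|Hdec] := classic (indecomposable S M).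
  exists 1%N, (fun _ => M); split=> [|_ //]; apply: is_dsum_iso.
  exists (fun x => 1%:M), (fun x => 1%:M).
  split; first exact: is_hom1.
  split; first exact: is_hom1.
  by move=> x _; rewrite mulmx1.
have [Hz|Hnz] := classic (is_zero S M).
  exists 0%N, (fun _ => M); split; last by case.
  exists (fun _ _ => 0), (fun _ _ => 0); do 2!split => [[]//|].
  move=> x xS; do 2!split => [[]//|].
  by rewrite big_ord0; apply: mx_dim0l; apply: Hz.
have [A [B [HA HB HAB HAz HBz]]] : exists A B, [/\ is_rep S A, is_rep S B,
    is_dsum S M (pair_fam A B), ~ is_zero S A & ~ is_zero S B].
  apply: NNPP => Hn; apply: Hdec; split=> //; split=> // A B HA HB HAB.
  by apply: NNPP => Hn'; apply: Hn; exists A, B; split => // HZ; apply: Hn'; [left|right].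
have le_sum : (dim_on A + dim_on B <= dim_on M)%N.
  by rewrite -big_split; apply: leq_sum => x; apply: is_dsum_pair_rdim.
have := dim_on_gt0 HAz; have := dim_on_gt0 HBz => ltB ltA.
by apply: (decomposition_dsum HAB) => -[[|[|t]] Ht]; rewrite /pair_fam //=;
  apply: IH => //; lia.
Qed.

End DirectSums.

Lemma is_rep_sub (K : fieldType) m n (S S' : {set vert m n}) (M : repd K m n) :
  S' \subset S -> is_rep S M -> is_rep S' M.
Proof.
move=> /subsetP sS [H1 H2]; split => [x /sS|x y z /sS xS /sS yS /sS zS]; first exact: H1.
exact: H2.
Qed.

Lemma is_dsum_sub (K : fieldType) m n (S S' : {set vert m n}) (T : finType)
    (M : repd K m n) (F : T -> repd K m n) :
  S' \subset S -> is_dsumT S M F -> is_dsumT S' M F.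
Proof.
move=> /subsetP sS [iota [pi [Hi [Hp Hx]]]]; exists iota, pi.
split=> [i x y /sS ? /sS|]; first exact: Hi.
by split=> [i x y /sS ? /sS|x /sS]; [apply: Hp | apply: Hx].
Qed.

Lemma is_iso_sub (K : fieldType) m n (S S' : {set vert m n}) (A B : repd K m n) :
  S' \subset S -> is_iso S A B -> is_iso S' A B.
Proof.
move=> /subsetP sS [g [h [Hg [Hh H]]]]; exists g, h.
split=> [x y /sS ? /sS|]; first exact: Hg.
by split=> [x y /sS ? /sS|x /sS]; [apply: Hh | apply: H].
Qed.

(* [p = 1] holds only propositionally, so A and B are read as a row and a column by summing
   over their trivial index. *)
Lemma mxtrace_mulmx_row1 (K : fieldType) p q (A : 'M[K]_(p, q)) (B : 'M[K]_(q, p)) :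
  p = 1%N -> \tr (A *m B) = ((\row_j \sum_i A i j) *m (\col_j \sum_i B j i)) 0 0.
Proof.
move=> Hp; subst p; rewrite /mxtrace big_ord1 !mxE; apply: eq_bigr => j _.
by rewrite !mxE !big_ord1.
Qed.

Lemma mxrank_sum (K : fieldType) (T : finType) p q (A : T -> 'M[K]_(p, q)) :
  (\rank (\sum_i A i)%R <= \sum_i \rank (A i))%N.
Proof.
apply: (big_ind2 (fun (B : 'M[K]_(p, q)) k => \rank B <= k)%N); first by rewrite mxrank0.
  by move=> B a C b HB HC; apply: leq_trans (mxrank_add B C) (leq_add HB HC).
by [].
Qed.

Section PairingRank.
Variables (K : fieldType) (m n : nat) (S : {set vert m n}).
Local Notation rep := (repd K m n).
Local Notation homs A B := (forall x, 'M[K]_(rdim A x, rdim B x)).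
Variables (L : rep) (x0 : vert m n).

Definition dual_homs (M : rep) (T : finType) (u : T -> homs L M) (w : T -> homs M L) :=
  [/\ forall a, is_hom S (u a), forall b, is_hom S (w b) &
      forall a b, \tr (u a x0 *m w b x0) = (a == b)%:R].

Definition has_dual_homs (M : rep) (r : nat) : Prop :=
  exists u w, @dual_homs M 'I_r u w.

(* The rank of the trace pairing (u, w) |-> tr (u w)(x0), realized as the length of the
   longest pair of dual families; the bound [rdim M x0] makes the maximum finite. *)
Definition pairing_rank (M : rep) : nat :=
  \max_(r < (rdim M x0).+1 | classicb (has_dual_homs M r)) r.

Lemma has_dual_homs_card (M : rep) (T : finType) u w :
  @dual_homs M T u w -> has_dual_homs M #|T|.
Proof.
case=> Hu Hw Huw; exists (fun a => u (enum_val a)), (fun b => w (enum_val b)).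
by split=> // a b; rewrite Huw (inj_eq enum_val_inj).
Qed.

Lemma has_dual_homs_leq (M : rep) r s : (s <= r)%N ->
  has_dual_homs M r -> has_dual_homs M s.
Proof.
move=> sr [u [w [Hu Hw Huw]]].
exists (fun a => u (widen_ord sr a)), (fun b => w (widen_ord sr b)).
by split=> // a b; rewrite Huw.
Qed.

Hypothesis HL1 : rdim L x0 = 1%N.

Lemma has_dual_homs_rdim (M : rep) r : has_dual_homs M r -> (r <= rdim M x0)%N.
Proof.
case=> u [w [_ _ Huw]].
pose U := \matrix_(a, j) (\row_j \sum_i u a x0 i j : 'rV_(rdim M x0)) 0 j.
pose W := \matrix_(j, b) (\col_j \sum_i w b x0 j i : 'cV_(rdim M x0)) j 0.
have UW : U *m W = 1%:M.
  apply/matrixP => a b; rewrite !mxE -Huw (mxtrace_mulmx_row1 _ _ HL1) !mxE.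
  by apply: eq_bigr => j _; rewrite !mxE.
have := mxrankM_maxl U W; rewrite UW mxrank1 => /leq_trans; apply.
exact: rank_leq_col.
Qed.

Lemma pairing_rank_max (M : rep) r : has_dual_homs M r -> (r <= pairing_rank M)%N.
Proof.
move=> H; have Hr : (r < (rdim M x0).+1)%N by rewrite ltnS; apply: has_dual_homs_rdim.
apply: (@leq_bigmax_cond _ _ (fun i : 'I_ _ => nat_of_ord i) (Ordinal Hr)).
exact/classicbP.
Qed.

Lemma has_dual_homs_pairing_rank (M : rep) : has_dual_homs M (pairing_rank M).
Proof.
have Hc : (0 < #|[pred r : 'I_(rdim M x0).+1 | classicb (has_dual_homs M r)]|)%N.
  apply/card_gt0P; exists ord0; rewrite inE; apply/classicbP.
  by exists (fun _ _ => 0), (fun _ _ => 0); split=> [[]|[]|[]].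
rewrite /pairing_rank.
by have [r /[!inE] /classicbP Hr ->] := eq_bigmax_cond (fun r : 'I_ _ => nat_of_ord r) Hc.
Qed.

(* Gaussian elimination on the pairing matrix of two families yields dual families. *)
Lemma mxrank_pairing_leq (M : rep) r s (u : 'I_r -> homs L M) (w : 'I_s -> homs M L) :
  (forall a, is_hom S (u a)) -> (forall b, is_hom S (w b)) ->
  (\rank (\matrix_(a, b) \tr (u a x0 *m w b x0)) <= pairing_rank M)%N.
Proof.
move=> Hu Hw; set Z := \matrix_(a, b) _; set t := \rank Z.
pose P : 'M[K]_(t, r) := pid_mx t *m invmx (col_ebase Z).
pose Q : 'M[K]_(s, t) := invmx (row_ebase Z) *m pid_mx t.
have PZQ : P *m Z *m Q = 1%:M.
  rewrite -{1}(mulmx_ebase Z) /P /Q -!mulmxA mulKmx ?col_ebase_unit // !mulmxA.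
  rewrite mulmxK ?row_ebase_unit // !mul_pid_mx -(pid_mx_1 K t); congr pid_mx.
  by have := rank_leq_row Z; have := rank_leq_col Z; lia.
apply: pairing_rank_max.
exists (fun c x => \sum_a P c a *: u a x), (fun d x => \sum_b Q b d *: w b x).
split=> [c|d|c d]; [exact: is_hom_lincomb | exact: is_hom_lincomb |].
have -> : ((c == d)%:R : K) = (P *m Z *m Q) c d by rewrite PZQ mxE.
rewrite mulmx_suml raddf_sum mxE.
under [RHS]eq_bigr => b _ do rewrite mxE big_distrl /=.
rewrite [RHS]exchange_big; apply: eq_bigr => a _.
rewrite /= -scalemxAl mxtraceZ mulmx_sumr raddf_sum big_distrr; apply: eq_bigr => b _.
by rewrite /= -scalemxAr mxtraceZ /Z !mxE mulrA mulrAC.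
Qed.

Hypothesis Hx0 : x0 \in S.

Lemma pairing_rank_dsum_leq (T : finType) (M : rep) (F : T -> rep) :
  is_dsumT S M F -> (pairing_rank M <= \sum_i pairing_rank (F i))%N.
Proof.
case=> iota [pi [Hi [Hp /(_ x0 Hx0) [_ [_ Hs]]]]].
have [u [w [Hu Hw Huw]]] := has_dual_homs_pairing_rank M.
pose Z i := \matrix_(a, b) \tr ((u a x0 *m pi i x0) *m (iota i x0 *m w b x0)).
have HZ : (\sum_i Z i)%R = 1%:M.
  apply/matrixP => a b; rewrite summxE mxE -Huw -[u a x0]mulmx1 -Hs.
  rewrite mulmx_sumr mulmx_suml raddf_sum; apply: eq_bigr => i _.
  by rewrite mxE !mulmxA.
have := mxrank_sum Z; rewrite HZ mxrank1 => /leq_trans; apply; apply: leq_sum => i _.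
by apply: (mxrank_pairing_leq (u := fun a x => u a x *m pi i x)
  (w := fun b x => iota i x *m w b x)) => [a|b]; apply: is_hom_comp.
Qed.

Lemma pairing_rank_dsum_geq (T : finType) (M : rep) (F : T -> rep) :
  is_dsumT S M F -> (\sum_i pairing_rank (F i) <= pairing_rank M)%N.
Proof.
case=> iota [pi [Hi [Hp /(_ x0 Hx0) [H1 [H0 _]]]]].
pose D i := constructive_indefinite_description _ (has_dual_homs_pairing_rank (F i)).
pose E i := constructive_indefinite_description _ (proj2_sig (D i)).
have HE i : dual_homs (proj1_sig (D i)) (proj1_sig (E i)) := proj2_sig (E i).
have -> : (\sum_i pairing_rank (F i))%N = #|{: {i : T & 'I_(pairing_rank (F i))}}|.
  by rewrite card_tagged sumnE big_map big_enum; apply: eq_bigr => i _; rewrite card_ord.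
apply: pairing_rank_max; apply: (has_dual_homs_card
  (u := fun p x => proj1_sig (D (tag p)) (tagged p) x *m iota (tag p) x)
  (w := fun p x => pi (tag p) x *m proj1_sig (E (tag p)) (tagged p) x)).
split=> [[i a]|[i a]|[i a] [j b]] /=; have [Hu Hw Huw] := HE i.
- exact: is_hom_comp.
- exact: is_hom_comp.
rewrite mulmxA -(mulmxA _ (iota i x0)); case: (eqVneq i j) b => [<-|ne] b.
  by rewrite H1 mulmx1 Huw eq_Tagged.
rewrite H0 // mulmx0 mul0mx mxtrace0; case: eqP => // /(congr1 tag) /= eij.
by rewrite eij eqxx in ne.
Qed.

Lemma pairing_rank_dsum (T : finType) (M : rep) (F : T -> rep) :
  is_dsumT S M F -> pairing_rank M = (\sum_i pairing_rank (F i))%N.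
Proof.
by move=> H; apply/eqP; rewrite eqn_leq pairing_rank_dsum_leq ?pairing_rank_dsum_geq.
Qed.

Lemma pairing_rank_self : pairing_rank L = 1%N.
Proof.
apply/eqP; rewrite eqn_leq; apply/andP; split.
  by have := has_dual_homs_rdim (has_dual_homs_pairing_rank L); rewrite HL1.
apply: pairing_rank_max; exists (fun _ x => 1%:M), (fun _ x => 1%:M).
by split=> [_|_|a b]; [exact: is_hom1 | exact: is_hom1 | rewrite !ord1 mulmx1 mxtrace1 HL1].
Qed.

Lemma pairing_rank_iso (F : rep) : is_iso S F L -> pairing_rank F = 1%N.
Proof.
by move/is_dsum_iso/pairing_rank_dsum => ->; rewrite big_ord1 pairing_rank_self.
Qed.

End PairingRank.

Lemma idempotent_row_base (K : fieldType) p (E : 'M[K]_p) : E *m E = E ->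
  let s := E *m pinvmx (row_base E) in
  [/\ row_base E *m s = 1%:M, s *m row_base E = E, row_base E *m E = row_base E
    & E *m s = s].
Proof.
move=> EE s; have rE : row_base E *m E = row_base E.
  have : (row_base E <= E)%MS by rewrite eq_row_base.
  by case/submxP => D ->; rewrite -mulmxA EE.
split=> //; first by rewrite mulmxA rE mulmxVp // row_base_free.
- by rewrite mulmxKpV // eq_row_base.
- by rewrite /s mulmxA EE.
Qed.

Section Retract.
Variables (K : fieldType) (m n : nat) (S : {set vert m n}).
Local Notation rep := (repd K m n).
Local Notation homs A B := (forall x, 'M[K]_(rdim A x, rdim B x)).

(* The complement of L is the image of the idempotent 1 - g f, split pointwise by row_base. *)
Lemma retract_complement (L F : rep) (f : homs L F) (g : homs F L) :
  is_rep S F -> is_hom S f -> is_hom S g -> (forall x, x \in S -> f x *m g x = 1%:M) ->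
  exists N : rep, [/\ is_rep S N, is_dsum S F (pair_fam L N) &
    is_zero S N -> forall x, x \in S -> g x *m f x = 1%:M].
Proof.
move=> [HF1 HF2] Hf Hg fg1.
pose E x := 1%:M - g x *m f x.
have Eg x : x \in S -> E x *m g x = 0.
  by move=> xS; rewrite mulmxBl mul1mx -mulmxA fg1 // mulmx1 subrr.
have fE x : x \in S -> f x *m E x = 0.
  by move=> xS; rewrite mulmxBr mulmx1 mulmxA fg1 // mul1mx subrr.
have EE x : x \in S -> E x *m E x = E x.
  by move=> xS; rewrite {1}/E mulmxBl mul1mx -mulmxA fE // mulmx0 subr0.
pose r x := row_base (E x); pose s x := E x *m pinvmx (r x).
have Hrs x : x \in S -> [/\ r x *m s x = 1%:M, s x *m r x = E x, r x *m E x = r x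
    & E x *m s x = s x] by move=> xS; apply: idempotent_row_base; apply: EE.
have rg x : x \in S -> r x *m g x = 0.
  by move=> xS; have [_ _ <- _] := Hrs x xS; rewrite -mulmxA Eg // mulmx0.
have fs x : x \in S -> f x *m s x = 0.
  by move=> xS; have [_ _ _ <-] := Hrs x xS; rewrite mulmxA fE // mul0mx.
clearbody r s.
pose C := @Repd K m n (fun x => \rank (E x)) (fun x y => r x *m rmap F x y *m s y).
have rFE x y : x \in S -> y \in S -> gle x y ->
    r x *m rmap F x y *m E y = r x *m rmap F x y.
  move=> xS yS xy; rewrite mulmxBr mulmx1 !mulmxA -(mulmxA (r x)) Hg //.
  by rewrite mulmxA rg // !mul0mx subr0.
have Hr : is_hom S (M := C) (N := F) r.
  by move=> x y xS yS xy /=; have [_ sr _ _] := Hrs y yS; rewrite -mulmxA sr rFE.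
have Hs : is_hom S (M := F) (N := C) s.
  move=> x y xS yS xy /=; rewrite !mulmxA; have [_ -> _ _] := Hrs x xS.
  by rewrite mulmxBl mul1mx mulmxBl -(mulmxA (g x)) -Hf // -!mulmxA fs // !mulmx0 subr0.
exists C; split.
- split=> [x xS|x y z xS yS zS xy yz] /=; first by rewrite HF1 // mulmx1; case: (Hrs x xS).
  have [_ Esr _ _] := Hrs y yS.
  by rewrite !mulmxA -(mulmxA _ (s y)) Esr rFE // -(mulmxA _ (rmap F x y)) -HF2.
- apply: (is_dsum_pair Hf Hg Hr Hs) => x xS; have [rs1 sr _ _] := Hrs x xS.
  by split; rewrite ?fg1 ?rs1 ?fs ?rg // sr addrC subrK.
move=> Cz x xS; have : E x == 0 by rewrite -mxrank_eq0; apply/eqP; apply: Cz.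
by rewrite subr_eq0 eq_sym => /eqP.
Qed.

End Retract.

Section Multiplicity.
Variables (K : fieldType) (m n : nat) (S : {set vert m n}).
Local Notation rep := (repd K m n).
Variables (L : rep) (x0 : vert m n).
Hypotheses (HL1 : rdim L x0 = 1%N) (Hx0 : x0 \in S) (HL : is_rep S L).
Hypothesis scalar_end : forall e : (forall x, 'M[K]_(rdim L x)), is_hom S e ->
  forall x, x \in S -> e x = (\tr (e x0))%:M.

Lemma indecomposable_iso (F : rep) :
  indecomposable S F -> has_dual_homs S L x0 F 1 -> is_iso S F L.
Proof.
move=> [HF [_ Hind]] [u [w [Hu Hw Huw]]].
have fg1 x : x \in S -> u ord0 x *m w ord0 x = 1%:M.
  by move=> xS; rewrite (scalar_end (is_hom_comp (Hu _) (Hw _)) xS) Huw.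
have [C [HC HFC Cz]] := retract_complement HF (Hu ord0) (Hw ord0) fg1.
have [/(_ x0 Hx0)|/Cz gf1] := Hind L C HL HC HFC; first by rewrite HL1.
by exists (w ord0), (u ord0); do 2!split => //; move=> x xS; split; [apply: gf1 | apply: fg1].
Qed.

Lemma pairing_rank_indecomposable (F : rep) : indecomposable S F ->
  pairing_rank S L x0 F = classicb (is_iso S F L).
Proof.
move=> Hind; case: classicbP => [|Hniso]; first exact: pairing_rank_iso.
apply/eqP; rewrite eqn0Ngt; apply: contra_notN Hniso => Hp.
apply: indecomposable_iso Hind (has_dual_homs_leq Hp (has_dual_homs_pairing_rank _ _ _ _)).
Qed.

Lemma mult_pairing_rank (M : rep) : is_rep S M -> mult S M L = pairing_rank S L x0 M.
Proof.
move=> HM; rewrite /mult; set P := fun c => _.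
have [c Pc] : exists c, P c.
  have [k [F [HMF HF]]] := exists_decomposition HM.
  pose s := [set i | classicb (is_iso S (F i) L)].
  exists #|s|, k, F; do 2!split => //; exists s; split=> // i.
  by rewrite inE; exact: iff_sym (rwP (classicbP _)).
have [k [F [HF [HMF [s [Hs ->]]]]]] := epsilon_spec (inhabits 0%N) P (ex_intro _ c Pc).
rewrite (pairing_rank_dsum HL1 Hx0 HMF) -sum1_card big_mkcond /=.
apply: eq_bigr => i _; rewrite pairing_rank_indecomposable //.
by case: classicbP => [/Hs ->|Hi]; last case: ifP => // /Hs.
Qed.

End Multiplicity.

(* Toggling a fixed a \in A is a sign-reversing involution on the subsets of A. *)
Lemma sum_powerset_sign (T : finType) (A : {set T}) :
  \sum_(X in powerset A) (-1 : int) ^+ #|X| = (A == set0 : nat)%:Z.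
Proof.
have [->|[a aA]] := set_0Vmem A; first by rewrite powerset0 big_set1 cards0 eqxx.
have /negPf -> : A != set0 by apply/set0Pn; exists a.
pose h (X : {set T}) := if a \in X then X :\ a else a |: X.
have hK : involutive h.
  move=> X; rewrite /h; have [aX|aX] := boolP (a \in X).
    by rewrite !inE eqxx /= setD1K.
  by rewrite setU11 setU1K.
set s := \sum_(X in _) _.
have sN : s = - s.
  rewrite {1}/s (reindex_inj (inv_inj hK)) -sumrN; apply: eq_big => X.
    rewrite !powersetE /h; case: (boolP (a \in X)) => aX.
      apply/idP/idP => H; last exact: subset_trans (subD1set _ _) H.
      by rewrite -(setD1K aX) subUset sub1set aA H.
    by rewrite subUset sub1set aA.
  rewrite /h; case: (boolP (a \in X)) => aX _.
    by rewrite (cardsD1 a X) aX add1n exprS mulN1r opprK.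
  by rewrite cardsU1 aX add1n exprS mulN1r.
have : 2 * s = 0 by rewrite mulr2n mulrDl mul1r {2}sN subrr.
by move/eqP; rewrite mulf_eq0 => /orP [//|/eqP].
Qed.

Section Grid.
Variables (m n : nat).
Implicit Types (x y z : vert m n) (I J : {set vert m n}).

Lemma gle_refl x : gle x x.
Proof. by rewrite /gle !leqnn. Qed.

Lemma gle_trans y x z : gle x y -> gle y z -> gle x z.
Proof. by rewrite /gle => /andP [a b] /andP [c d]; rewrite (leq_trans a c) (leq_trans b d). Qed.

Lemma gle_anti x y : gle x y -> gle y x -> x = y.
Proof.
case: x y => [x1 x2] [y1 y2]; rewrite /gle /= => /andP [h1 h2] /andP [h3 h4].
by congr pair; apply: val_inj; apply/eqP; rewrite eqn_leq ?h1 ?h2 ?h3 ?h4.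
Qed.

Lemma arrow_gle x y : arrow x y -> gle x y.
Proof. by rewrite /arrow /gle => /orP [] /andP [/eqP -> /eqP <-]; rewrite leqnn leqnSn. Qed.

Lemma arrow_ltn x y : arrow x y -> (x.1 + x.2 < y.1 + y.2)%N.
Proof. by rewrite /arrow => /orP [] /andP [/eqP -> /eqP <-]; rewrite ?ltn_add2l ?ltn_add2r. Qed.

Lemma connectedbP I x y : connectedb I -> x \in I -> y \in I ->
  connect (fun a b => [&& a \in I, b \in I & adj a b]) x y.
Proof. by move=> /forall_inP /(_ x) H xI yI; move: (H xI) => /forall_inP /(_ y yI). Qed.

Lemma convexbP I x y z : convexb I -> x \in I -> z \in I -> gle x y -> gle y z -> y \in I.
Proof.
move=> /forall_inP /(_ x) H xI zI xy yz.
by move: (H xI) => /forall_inP /(_ z zI) /forallP /(_ y); rewrite xy yz.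
Qed.

Lemma connected_boundary I J a b : connectedb J -> a \in J -> a \in I -> b \in J ->
  b \notin I -> exists x y, [/\ x \in I, x \in J, y \in J, y \notin I & adj x y].
Proof.
move=> HJ aJ aI bJ bI; case/connectP: (connectedbP HJ aJ bJ) => p Hp Eb.
elim: p a aJ aI Hp Eb => [|c p IHp] a aJ aI /=; first by move=> _ E; rewrite E aI in bI.
case/andP => /and3P [_ cJ ac] Hp Eb.
by case cI: (c \in I); [apply: (IHp c) | exists a, c; rewrite cI].
Qed.

(* The maps of V_I between related vertices are identities. *)
Definition comparable_in (S I : {set vert m n}) : rel (vert m n) :=
  fun a b => [&& a \in S, a \in I, b \in S, b \in I & gle a b || gle b a].

Lemma comparable_in_sym S I : symmetric (comparable_in S I).
Proof.
move=> a b; rewrite /comparable_in orbC.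
by case: (a \in S); case: (a \in I); case: (b \in S); case: (b \in I).
Qed.

Lemma connect_comparable_setT I x0 x : connectedb I -> x0 \in I -> x \in I ->
  connect (comparable_in [set: vert m n] I) x0 x.
Proof.
move=> HI x0I xI; apply: connect_sub (connectedbP HI x0I xI) => a b /and3P [aI bI ab].
apply: connect1; rewrite /comparable_in !inE aI bI /=.
by case/orP: ab => /arrow_gle ->; rewrite ?orbT.
Qed.

(* Every arrow increases the coordinate sum, so extremizing it yields a source (a sink). *)
Definition lower_source I x := [arg min_(y < x | (y \in I) && gle y x) (y.1 + y.2)%N].
Definition upper_sink I x := [arg max_(y > x | (y \in I) && gle x y) (y.1 + y.2)%N].

Lemma lower_sourceP I x : x \in I ->
  [/\ is_source I (lower_source I x), lower_source I x \in I & gle (lower_source I x) x].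
Proof.
move=> xI; rewrite /lower_source; case: arg_minnP; first by rewrite xI gle_refl.
move=> s /andP [sI sx] smin; split => //; rewrite /is_source sI.
apply/forall_inP => y yI; apply/negP => ys.
have := smin y; rewrite yI (gle_trans (arrow_gle ys) sx) => /(_ isT).
by rewrite leqNgt arrow_ltn.
Qed.

Lemma upper_sinkP I x : x \in I ->
  [/\ is_sink I (upper_sink I x), upper_sink I x \in I & gle x (upper_sink I x)].
Proof.
move=> xI; rewrite /upper_sink; case: arg_maxnP; first by rewrite xI gle_refl.
move=> s /andP [sI xs] smax; split => //; rewrite /is_sink sI.
apply/forall_inP => y yI; apply/negP => sy.
have := smax y; rewrite yI (gle_trans xs (arrow_gle sy)) => /(_ isT).
by move=> h; have := leq_trans (arrow_ltn sy) h; rewrite ltnn.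
Qed.

Lemma ess_ss_ess k I x : x \in ess_ss I -> x \in ess k I.
Proof.
have xI : x \in ess_ss I -> x \in I by rewrite inE => /orP [] /andP [].
case: k => //= Hx.
by rewrite /ess_cc inE xI //=; apply/andP; split; apply/imsetP; exists x.
Qed.

Lemma ess_subset k I : ess k I \subset I.
Proof.
apply/subsetP => x; case: k => //=; first by rewrite inE => /orP [] /andP [].
by rewrite /ess_cc inE => /andP [].
Qed.

Lemma lower_source_ess k I x : x \in I -> lower_source I x \in ess k I.
Proof. by case/lower_sourceP => H _ _; apply: ess_ss_ess; rewrite inE H. Qed.

Lemma upper_sink_ess k I x : x \in I -> upper_sink I x \in ess k I.
Proof. by case/upper_sinkP => H _ _; apply: ess_ss_ess; rewrite inE H orbT. Qed.

Lemma gle_source_sink I x : x \in I ->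
  gle (lower_source I x) x /\ gle x (upper_sink I x).
Proof. by move=> xI; case: (lower_sourceP xI); case: (upper_sinkP xI). Qed.

Lemma ess_subset_convex k I J : convexb J -> (ess k I \subset J) = (I \subset J).
Proof.
move=> HJ; apply/idP/idP => [EJ|IJ]; last exact: subset_trans (ess_subset k I) IJ.
apply/subsetP => x xI; have [sx xt] := gle_source_sink xI.
by apply: (convexbP HJ _ _ sx xt); apply: (subsetP EJ);
  [apply: lower_source_ess | apply: upper_sink_ess].
Qed.

(* For an edge a -- b of I with a <= b, both lower_source a and lower_source b lie below
   upper_sink b; following a path of I thus links all lower sources. *)
Lemma connect_ess k I a0 x : connectedb I -> a0 \in I -> x \in ess k I ->
  connect (comparable_in (ess k I) I) (lower_source I a0) x.
Proof.
move=> HI a0I xE; set E := ess k I; set R := comparable_in E I.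
have EI := subsetP (ess_subset k I).
have Rsym : connect_sym R by apply: sym_connect_sym; apply: comparable_in_sym.
have Rgle a b : a \in E -> b \in E -> gle a b -> R a b.
  by move=> aE bE ab; rewrite /R /comparable_in aE bE !EI //= ab.
have st y : y \in I -> R (lower_source I y) (upper_sink I y).
  move=> yI; have [sy yt] := gle_source_sink yI.
  by apply: Rgle; [apply: lower_source_ess | apply: upper_sink_ess | apply: gle_trans yt].
have srcR a b : a \in I -> b \in I -> gle a b -> R (lower_source I a) (upper_sink I b).
  move=> aI bI ab; have [sa _] := gle_source_sink aI; have [_ bt] := gle_source_sink bI.
  apply: Rgle; [exact: lower_source_ess | exact: upper_sink_ess |].
  exact: gle_trans sa (gle_trans ab bt).
have Hsrc y : y \in I -> connect R (lower_source I a0) (lower_source I y).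
  move=> yI; case/connectP: (connectedbP HI a0I yI) => p Hp ->.
  elim: p a0 a0I Hp {yI} => [|b p IHp] a aI //= /andP [/and3P [_ bI ab] Hp].
  apply: connect_trans (IHp b bI Hp); case/orP: ab => /arrow_gle ab.
    apply: (connect_trans (connect1 (srcR a b aI bI ab))).
    by rewrite Rsym; apply/connect1/st.
  apply: (connect_trans (connect1 (st a aI))).
  by rewrite Rsym; apply/connect1/srcR.
have xI := EI x xE; apply: connect_trans (Hsrc x xI) (connect1 _).
by apply: Rgle => //; [apply: lower_source_ess | case: (gle_source_sink xI)].
Qed.

Lemma connect_box x z : gle x z ->
  connect (fun a b => [&& gle x a, gle a z, gle x b, gle b z & adj a b]) x z.
Proof.
move=> xz; set R := fun a b => _.
suff box_to_top d y : (z.1 - y.1 + (z.2 - y.2) <= d)%N -> gle x y -> gle y z -> connect R y z.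
  exact: box_to_top (leqnn _) (gle_refl x) xz.
elim: d y => [|d IH] y Hd xy yz.
  by rewrite (gle_anti yz) //; move: yz Hd; rewrite /gle; lia.
have step y' : arrow y y' -> gle y' z -> connect R y z.
  move=> yy' y'z; have xy' := gle_trans xy (arrow_gle yy').
  have Ryy' : R y y' by rewrite /R xy yz xy' y'z /adj yy'.
  apply: connect_trans (connect1 Ryy') (IH y' _ xy' y'z).
  by move: yz y'z Hd (arrow_ltn yy'); rewrite /gle; lia.
case: (ltnP y.1 z.1) => [lt1|ge1].
  apply: (step (Ordinal (leq_ltn_trans lt1 (ltn_ord z.1)), y.2)).
    by rewrite /arrow /= !eqxx orbT.
  by move: yz; rewrite /gle /= lt1 => /andP [].
case: (ltnP y.2 z.2) => [lt2|ge2].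
  apply: (step (y.1, Ordinal (leq_ltn_trans lt2 (ltn_ord z.2)))).
    by rewrite /arrow /= !eqxx.
  by move: yz; rewrite /gle /= lt2 andbT => /andP [].
by rewrite (gle_anti yz) // /gle ge1 ge2.
Qed.

(* The join of intervals containing a common interval: the convex hull of their union. *)
Definition hull (T : {set {set vert m n}}) : {set vert m n} :=
  [set z | [exists x, exists y, [&& x \in \bigcup_(C in T) C, y \in \bigcup_(C in T) C,
     gle x z & gle z y]]].

Lemma mem_bigcup_sets z (T : {set {set vert m n}}) :
  (z \in \bigcup_(C in T) C) = [exists C in T, z \in C].
Proof. by apply/bigcupP/exists_inP => -[C CT zC]; exists C. Qed.

Lemma sub_hull (T : {set {set vert m n}}) L : L \in T -> L \subset hull T.
Proof.
move=> LT; apply/subsetP => z zL; rewrite inE; apply/existsP; exists z; apply/existsP; exists z.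
suff zT : [exists C in T, z \in C] by rewrite gle_refl mem_bigcup_sets zT.
by apply/exists_inP; exists L.
Qed.

Lemma hull_min (T : {set {set vert m n}}) J : convexb J ->
  (forall L, L \in T -> L \subset J) -> hull T \subset J.
Proof.
move=> HJ TJ; apply/subsetP => z; rewrite inE => /existsP [x /existsP [y]].
rewrite !mem_bigcup_sets => /and4P [/exists_inP [C CT xC] /exists_inP [D DT yD] xz zy].
by apply: (convexbP HJ _ _ xz zy); [apply: (subsetP (TJ _ CT)) | apply: (subsetP (TJ _ DT))].
Qed.

Lemma hull_interval I (T : {set {set vert m n}}) : is_interval I ->
  (forall C, C \in T -> is_interval C /\ I \subset C) -> T != set0 -> is_interval (hull T).
Proof.
case/and3P => /set0Pn [i0 i0I] _ _ HT /set0Pn [C0 C0T].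
set H := hull T; set R := fun a b => [&& a \in H, b \in H & adj a b].
have i0H : i0 \in H by apply: (subsetP (sub_hull C0T)); case: (HT _ C0T) => _ /subsetP; apply.
have Hconn z : z \in H -> connect R i0 z.
  rewrite inE => /existsP [x /existsP [y /and4P [xU yU xz zy]]].
  have /exists_inP [C CT xC] : [exists C in T, x \in C] by rewrite -mem_bigcup_sets.
  have [/and3P [_ HC _] IC] := HT _ CT; have CH := subsetP (sub_hull CT).
  apply: (connect_trans (y := x)).
    apply: connect_sub (connectedbP HC (subsetP IC _ i0I) xC) => a b /and3P [aC bC ab].
    by apply: connect1; rewrite /R ab !CH.
  apply: connect_sub (connect_box xz) => a b /and5P [xa az xb bz ab].
  apply: connect1; rewrite /R ab andbT !inE; apply/andP; split;
    apply/existsP; exists x; apply/existsP; exists y.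
  - by rewrite xU yU xa (gle_trans az zy).
  - by rewrite xU yU xb (gle_trans bz zy).
have Rsym : connect_sym R.
  by apply: sym_connect_sym => a b; rewrite /R /adj orbC andbCA !andbA [(b \in _) && _]andbC.
apply/and3P; split; first by apply/set0Pn; exists i0.
  apply/forall_inP => x xH; apply/forall_inP => y yH.
  by apply: (connect_trans (y := i0)); [rewrite Rsym|]; apply: Hconn.
apply/forall_inP => x; rewrite inE => /existsP [x1 /existsP [y1 /and4P [x1U y1U x1x xy1]]].
apply/forall_inP => y; rewrite inE => /existsP [x2 /existsP [y2 /and4P [x2U y2U x2y yy2]]].
apply/forallP => z; apply/implyP => /andP [xz zy]; rewrite inE.
apply/existsP; exists x1; apply/existsP; exists y2.
by rewrite x1U y2U (gle_trans x1x xz) (gle_trans zy yy2).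
Qed.

End Grid.

Section Covers.
Variables (m n : nat).
Implicit Types (I J : {set vert m n}) (T : {set {set vert m n}}).

Lemma CovP I C : C \in Cov I -> is_interval C /\ I \proper C.
Proof. by rewrite inE => /and3P []. Qed.

Lemma bigjoinP I T : is_interval I -> T \subset Cov I -> T != set0 ->
  [/\ is_interval (bigjoin T), forall L, L \in T -> L \subset bigjoin T &
    forall J, is_interval J -> (forall L, L \in T -> L \subset J) -> bigjoin T \subset J].
Proof.
move=> HI TC Tn; pose P J := is_interval J /\ (forall L, L \in T -> L \subset J) /\
  (forall J', is_interval J' -> (forall L, L \in T -> L \subset J') -> J \subset J').
suff [? [? ?]] : P (bigjoin T) by [].
apply: (epsilon_spec (inhabits set0) P); exists (hull T); split.
  apply: hull_interval HI _ Tn => C /(subsetP TC) /CovP [HC /proper_sub IC]; exact: conj.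
split=> [L|J /and3P [_ _ HJ]]; first exact: sub_hull.
exact: hull_min.
Qed.

Lemma bigjoin_subset I T J : is_interval I -> T \subset Cov I -> T != set0 ->
  is_interval J -> (bigjoin T \subset J) = [forall L in T, L \subset J].
Proof.
move=> HI TC Tn HJ; have [_ Tsub Tmin] := bigjoinP HI TC Tn.
apply/idP/forall_inP => [TJ L LT|]; [exact: subset_trans (Tsub L LT) TJ | exact: Tmin].
Qed.

Lemma Cov_below I J : is_interval J -> I \proper J -> exists2 C, C \in Cov I & C \subset J.
Proof.
move=> HJ IJ; pose P (L : {set vert m n}) := [&& is_interval L, I \proper L & L \subset J].
have PJ : P J by rewrite /P HJ IJ subxx.
case: (arg_minnP (fun L : {set vert m n} => #|L|) PJ) => C /and3P [HC IC CJ] Cmin.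
exists C => //; rewrite inE HC IC; apply/forallP => L; apply/negP => /and3P [HL IL LC].
have := Cmin L; rewrite /P HL IL (subset_trans (proper_sub LC) CJ) => /(_ isT).
by rewrite leqNgt proper_card.
Qed.

Lemma Cov_below_eq0 I J : is_interval J ->
  ([set C in Cov I | C \subset J] == set0) = ~~ (I \proper J).
Proof.
move=> HJ; apply/eqP/idP => [A0|IJ].
  apply/negP => /(Cov_below HJ) [C CI CJ].
  by have := in_set0 C; rewrite -A0 in_set CI CJ.
apply/setP => C; rewrite in_set0 in_set; apply/negP => /andP [/CovP [_ IC] CJ].
by case/negP: IJ; apply: proper_sub_trans IC CJ.
Qed.

Lemma sum_Cov_bigjoin_sign I J : is_interval I -> is_interval J ->
  \sum_(S in powerset (Cov I) | S != set0) (-1) ^+ #|S| * (bigjoin S \subset J : nat)%:Z =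
  \sum_(S in powerset [set C in Cov I | C \subset J] | S != set0) (-1 : int) ^+ #|S|.
Proof.
move=> HI HJ; rewrite big_mkcond [RHS]big_mkcond; apply: eq_bigr => S _.
rewrite !powersetE; have [SC|SnC] /= := boolP (S \subset Cov I); last first.
  suff /negPf -> : ~~ (S \subset [set C in Cov I | C \subset J]) by [].
  by apply: contra SnC => /subset_trans; apply; apply/subsetP => C; rewrite in_set => /andP [].
have [Sn|] /= := boolP (S != set0); last by rewrite andbF.
rewrite andbT (bigjoin_subset HI SC Sn HJ).
suff -> : [forall L in S, L \subset J] = (S \subset [set C in Cov I | C \subset J]).
  by case: (S \subset _); rewrite ?mulr1 ?mulr0.
apply/forall_inP/subsetP => [SJ L LS|SA L /SA]; last by rewrite in_set => /andP [].
by rewrite in_set (subsetP SC _ LS) SJ.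
Qed.

Lemma eq_interval_inclusion_exclusion I J : is_interval I -> is_interval J ->
  (J == I : nat)%:Z = (I \subset J : nat)%:Z +
    \sum_(S in powerset (Cov I) | S != set0) (-1) ^+ #|S| * (bigjoin S \subset J : nat)%:Z.
Proof.
move=> HI HJ; rewrite sum_Cov_bigjoin_sign //.
have -> : forall A : {set {set vert m n}}, \sum_(S in powerset A | S != set0) (-1 : int) ^+ #|S| =
    \sum_(S in powerset A) (-1) ^+ #|S| - 1.
  move=> A; rewrite [X in _ = X - _](bigD1 set0) ?powersetE ?sub0set //=.
  by rewrite cards0 expr0 addrAC subrr add0r.
rewrite sum_powerset_sign Cov_below_eq0 // properEneq eq_sym.
by case: (I =P J) => [->|_]; rewrite ?eqxx ?subxx //=; case: (I \subset J).
Qed.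

End Covers.

Section OnesMatrix.
Variable K : fieldType.
Local Notation ones p q := (\matrix_(i, j) 1 : 'M[K]_(p, q)).

Lemma ones_scalar p : (p <= 1)%N -> ones p p = 1%:M.
Proof.
by case: p => [|[|p]] // _; [apply: mx_dim0l | apply/matrixP => i j; rewrite !ord1 !mxE].
Qed.

Lemma mulmx_ones a b c : (a <= 1)%N -> (b <= 1)%N -> (c <= 1)%N ->
  ((0 < a)%N -> (0 < c)%N -> (0 < b)%N) -> ones a b *m ones b c = ones a c.
Proof.
case: a => [|[|a]] // _; first by move=> *; apply: mx_dim0l.
case: c => [|[|c]] // Hb _; first by move=> *; apply: mx_dim0r.
move=> /(_ isT isT); case: b Hb => [|[|b]] // _ _.
by apply/matrixP => i j; rewrite !mxE big_ord1 !mxE mulr1.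
Qed.

Lemma mxtrace_ones_conj p q (A : 'M[K]_p) (B : 'M[K]_q) : p = 1%N -> q = 1%N ->
  ones p q *m B = A *m ones p q -> \tr A = \tr B.
Proof.
move=> Hp Hq; subst p q => /matrixP /(_ 0 0).
by rewrite !mxE !big_ord1 !mxE mul1r mulr1 /mxtrace !big_ord1 => ->.
Qed.

Lemma mulmx_ones_eq0 p q r (A : 'M[K]_(p, q)) : q = 1%N -> r = 1%N ->
  A *m ones q r = 0 -> A = 0.
Proof. by move=> Hq Hr; subst q r; rewrite ones_scalar // mulmx1. Qed.

Lemma ones_mulmx_eq0 p q r (B : 'M[K]_(q, r)) : p = 1%N -> q = 1%N ->
  ones p q *m B = 0 -> B = 0.
Proof. by move=> Hp Hq; subst p q; rewrite ones_scalar // mul1mx. Qed.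

End OnesMatrix.

Lemma scalar_mx1_neq0 (K : fieldType) p : p = 1%N -> (1%:M : 'M[K]_p) != 0.
Proof.
by move=> Hp; subst p; apply/eqP => /matrixP /(_ 0 0) /eqP; rewrite !mxE oner_eq0.
Qed.

Section IntervalRep.
Variables (K : fieldType) (m n : nat).
Local Notation rep := (repd K m n).

Lemma is_rep_VI (S I : {set vert m n}) :
  (forall x y z, x \in S -> y \in S -> z \in S -> gle x y -> gle y z ->
     x \in I -> z \in I -> y \in I) ->
  is_rep S (VI K I).
Proof.
move=> Hcv; split=> [x _|x y z xS yS zS xy yz] /=; first exact/ones_scalar/leq_b1.
rewrite mulmx_ones ?leq_b1 //.
by case: (x \in I) (Hcv x y z xS yS zS xy yz) => //; case: (z \in I) => // /(_ isT isT) ->.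
Qed.

Variables (S I : {set vert m n}) (x0 : vert m n).
Hypotheses (Hx0S : x0 \in S) (Hx0I : x0 \in I).
Hypothesis Hconn : forall x, x \in S -> x \in I -> connect (comparable_in S I) x0 x.

Lemma VI_scalar_end (e : forall x, 'M[K]_(rdim (VI K I) x)) :
  is_hom S e -> forall x, x \in S -> e x = (\tr (e x0))%:M.
Proof.
move=> He x xS; case xI: (x \in I); last by apply: mx_dim0l; rewrite /= xI.
have tr_step a b : comparable_in S I a b -> \tr (e a) = \tr (e b).
  case/and5P => aS aI bS bI /orP [ab|ba].
    by apply: mxtrace_ones_conj; rewrite /= ?aI ?bI //; apply: He.
  by apply/esym/mxtrace_ones_conj; rewrite /= ?aI ?bI //; apply: He.
have : \tr (e x) = \tr (e x0).
  case/connectP: (Hconn xS xI) => p Hp ->; elim: p x0 Hp => [|b p IHp] a //= /andP [ab Hp].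
  by rewrite IHp // (tr_step _ _ ab).
by move <-; apply: mx_dim1_scalar; rewrite /= xI.
Qed.

Let HI1 : rdim (VI K I) x0 = 1%N. Proof. by rewrite /= Hx0I. Qed.

Lemma pairing_rank_VI_eq0 (V : rep) :
  (forall f g, is_hom S (M := VI K I) (N := V) f -> is_hom S (M := V) (N := VI K I) g ->
     exists2 z, z \in S & z \in I /\ f z *m g z = 0) ->
  pairing_rank S (VI K I) x0 V = 0%N.
Proof.
move=> Hfg; apply/eqP; rewrite eqn0Ngt; apply/negP => pos.
have [u [w [Hu Hw Huw]]] := has_dual_homs_leq pos (has_dual_homs_pairing_rank S (VI K I) x0 V).
have [z zS [zI fg0]] := Hfg _ _ (Hu ord0) (Hw ord0).
have := VI_scalar_end (is_hom_comp (Hu ord0) (Hw ord0)) zS.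
by rewrite fg0 Huw eqxx => /esym/eqP; apply/negP/scalar_mx1_neq0; rewrite /= zI.
Qed.

Lemma pairing_rank_VI_sub (J : {set vert m n}) : S \subset I ->
  pairing_rank S (VI K I) x0 (VI K J) = (S \subset J).
Proof.
move=> SI; have [SJ|/subsetPn [z zS zJ]] := boolP (S \subset J); last first.
  apply: pairing_rank_VI_eq0 => f g _ _; exists z => //; split; first exact: (subsetP SI).
  by apply: mulmx_dim0; rewrite /= (negbTE zJ).
have inIJ x : x \in S -> (x \in I) && (x \in J) by move=> xS; rewrite (subsetP SI) ?(subsetP SJ).
apply/eqP; rewrite eqn_leq; apply/andP; split.
  have := has_dual_homs_rdim HI1 (has_dual_homs_pairing_rank S (VI K I) x0 (VI K J)).
  by move/leq_trans; apply; apply: leq_b1.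
apply: (pairing_rank_max HI1).
exists (fun _ x => \matrix_(i, j) 1), (fun _ x => \matrix_(i, j) 1).
split=> [_ x y xS yS _|_ x y xS yS _|a b] /=.
- by move: (inIJ x xS) (inIJ y yS) => /andP [-> ->] /andP [-> ->]; rewrite !mulmx_ones.
- by move: (inIJ x xS) (inIJ y yS) => /andP [-> ->] /andP [-> ->]; rewrite !mulmx_ones.
rewrite !ord1 eqxx; move: (inIJ x0 Hx0S) => /andP [-> ->].
by rewrite mulmx_ones // ones_scalar // mxtrace1.
Qed.

End IntervalRep.

Lemma is_rep_VI_setT (K : fieldType) m n (I : {set vert m n}) :
  is_interval I -> is_rep [set: vert m n] (VI K I).
Proof.
case/and3P=> _ _ HI; apply: is_rep_VI => x y z _ _ _ xy yz xI zI.
exact: convexbP HI xI zI xy yz.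
Qed.

(* If J <> I, a vertex of I at the boundary of J (or of J at the boundary of I) forces a
   composite V_I -> V_J -> V_I to vanish there. *)
Lemma pairing_rank_VI_setT (K : fieldType) m n (I J : {set vert m n}) x0 :
  is_interval I -> x0 \in I -> is_interval J ->
  pairing_rank [set: vert m n] (VI K I) x0 (VI K J) = (J == I).
Proof.
move=> HI x0I /and3P [_ HJ _].
have x0T : x0 \in [set: vert m n] by rewrite inE.
have Hconn x : x \in [set: vert m n] -> x \in I -> connect (comparable_in [set: vert m n] I) x0 x.
  by case/and3P: HI => _ HcI _ _; apply: connect_comparable_setT.
have [->|neq] := eqVneq J I.
  by apply: pairing_rank_self; rewrite /= x0I.
apply: (pairing_rank_VI_eq0 Hconn) => f g Hf Hg.
have [IJ|/subsetPn [z zI zJ]] := boolP (I \subset J); last first.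
  by exists z; rewrite ?inE //; split=> //; apply: mulmx_dim0; rewrite /= (negbTE zJ).
have /subsetPn [b bJ bI] : ~~ (J \subset I) by apply: contra neq => JI; rewrite eqEsubset JI.
have [x [y [xI xJ yJ yI /orP [xy|yx]]]] := connected_boundary HJ (subsetP IJ _ x0I) x0I bJ bI.
  exists x; rewrite ?inE //; split => //.
  have := Hf x y (in_setT _) (in_setT _) (arrow_gle xy).
  by rewrite mulmx_dim0 /= ?(negbTE yI) // => /esym /mulmx_ones_eq0 ->;
    rewrite ?mul0mx /= ?xJ ?yJ.
exists x; rewrite ?inE //; split => //.
have := Hg y x (in_setT _) (in_setT _) (arrow_gle yx).
by rewrite [RHS]mulmx_dim0 /= ?(negbTE yI) // => /ones_mulmx_eq0 ->;
  rewrite ?mulmx0 /= ?xJ ?yJ.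
Qed.

Section IntervalDecomposable.
Variables (K : fieldType) (m n : nat).
Local Notation rep := (repd K m n).
Variables (M : rep) (k : nat) (F : 'I_k -> rep) (J : 'I_k -> {set vert m n}).
Hypotheses (HM : is_rep setT M) (HMF : is_dsum setT M F).
Hypotheses (HJ : forall i, is_interval (J i)) (HFJ : forall i, is_iso setT (F i) (VI K (J i))).

Lemma pairing_rank_intervals (S : {set vert m n}) (L : rep) x0 :
  rdim L x0 = 1%N -> x0 \in S ->
  pairing_rank S L x0 M = (\sum_i pairing_rank S L x0 (VI K (J i)))%N.
Proof.
move=> HL1 Hx0; rewrite (pairing_rank_dsum HL1 Hx0 (is_dsum_sub (subsetT S) HMF)).
apply: eq_bigr => i _; have /is_dsum_iso := is_iso_sub (subsetT S) (HFJ i).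
by move/(pairing_rank_dsum HL1 Hx0) => ->; rewrite big_ord1.
Qed.

Lemma cmult_intervals e (I : {set vert m n}) : is_interval I ->
  cmult e M I = (\sum_i (I \subset J i))%N.
Proof.
move=> HI; have /and3P [/set0Pn [a0 a0I] HcI _] := HI.
set S := ess e I; pose x0 := lower_source I a0.
have x0S : x0 \in S by apply: lower_source_ess.
have [_ x0I _] := lower_sourceP a0I.
have HI1 : rdim (VI K I) x0 = 1%N by rewrite /= x0I.
have SI := subsetP (ess_subset e I).
have Hconn x : x \in S -> x \in I -> connect (comparable_in S I) x0 x.
  by move=> xS _; apply: connect_ess.
have HIrep : is_rep S (VI K I) by apply: is_rep_VI => x y z _ /SI yI.
have HMS := is_rep_sub (subsetT S) HM.
rewrite /cmult (mult_pairing_rank HI1 x0S HIrep (VI_scalar_end Hconn) HMS).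
rewrite (pairing_rank_intervals HI1 x0S); apply: eq_bigr => i _.
rewrite (pairing_rank_VI_sub K x0S x0I Hconn _ (ess_subset e I)).
by rewrite /S ess_subset_convex //; case/and3P: (HJ i).
Qed.

Lemma mult_intervals (I : {set vert m n}) : is_interval I ->
  mult setT M (VI K I) = (\sum_i (J i == I))%N.
Proof.
move=> HI; have /and3P [/set0Pn [x0 x0I] HcI _] := HI.
have HI1 : rdim (VI K I) x0 = 1%N by rewrite /= x0I.
have x0T : x0 \in setT by rewrite inE.
have Hconn x : x \in setT -> x \in I -> connect (comparable_in setT I) x0 x.
  by move=> _; apply: connect_comparable_setT.
rewrite (mult_pairing_rank HI1 x0T (is_rep_VI_setT K HI) (VI_scalar_end Hconn) HM).
by rewrite (pairing_rank_intervals HI1 x0T); apply: eq_bigr => i _; apply: pairing_rank_VI_setT.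
Qed.

End IntervalDecomposable.

Theorem mainTheorem11 (K : fieldType) (m n : nat) (Hm : (0 < m)%N) (Hn : (0 < n)%N)
  (M : repd K m n) (HM : is_rep setT M) (Hid : interval_decomposable M)
  (I : {set vert m n}) (HI : is_interval I) (k : ess_kind) :
  (mult setT M (VI K I))%:Z =
    (cmult k M I)%:Z +
    \sum_(S in powerset (Cov I) | S != set0)
        (-1) ^+ #|S| * (cmult k M (bigjoin S))%:Z.
Proof.
have [r [F [HMF HF]]] := Hid.
have [J HJ] : exists J : 'I_r -> {set vert m n},
    forall i, is_interval (J i) /\ is_iso setT (F i) (VI K (J i)).
  exact: (choice (fun i J => is_interval J /\ is_iso setT (F i) (VI K J))).
have cmultE := cmult_intervals HM HMF (fun i => proj1 (HJ i)) (fun i => proj2 (HJ i)) k.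
have -> : \sum_(S in powerset (Cov I) | S != set0) (-1) ^+ #|S| * (cmult k M (bigjoin S))%:Z
    = \sum_i \sum_(S in powerset (Cov I) | S != set0)
        (-1) ^+ #|S| * (bigjoin S \subset J i : nat)%:Z.
  rewrite exchange_big; apply: eq_bigr => S /andP [SC Sn]; rewrite powersetE in SC.
  have [HS _ _] := bigjoinP HI SC Sn.
  by rewrite cmultE // -natz natr_sum mulr_sumr; apply: eq_bigr => i _; rewrite natz.
rewrite (mult_intervals HM HMF (fun i => proj1 (HJ i)) (fun i => proj2 (HJ i)) HI).
rewrite cmultE // -!natz !natr_sum -big_split; apply: eq_bigr => i _.
by rewrite !natz; apply: eq_interval_inclusion_exclusion => //; case: (HJ i).
Qed.
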